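(* Let $N$ be a positive integer and $\alpha>1$ with $\alpha N\in\mathbb{N}$. Then $\mathrm{TFF}(\alpha,N)=\mathrm{TFF}(\tilde\alpha,\tilde N)$, where $1/\alpha+1/\tilde\alpha=1$ and $\tilde N=N(\alpha-1)$.
   Context: For a positive integer $N$, $\mathrm{TFF}(\alpha,N)$ is the set of weakly decreasing sequences of positive integers $(L_1,\ldots,L_K)$ such that there exist orthogonal projections $P_1,\ldots,P_K$ on $\mathbb{R}^N$ with $\operatorname{rank}P_i=L_i$ and $\sum_{i=1}^K P_i=\alpha\mathbf I$. *)

From HB Require Import structures.
From mathcomp Require Import all_boot all_order all_algebra.
From mathcomp Require Import reals.
Set Implicit Arguments. Unset Strict Implicit. Unset Printing Implicit Defensive.
Import Order.TTheory GRing.Theory Num.Theory.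
Local Open Scope ring_scope.

Definition orth_proj (R : realType) (n : nat) (P : 'M[R]_n) : Prop :=
  P *m P = P /\ P^T = P.

Definition TFF (R : realType) (alpha : R) (N : nat) (L : seq nat) : Prop :=
  sorted geq L /\ all (fun l => 0 < l)%N L /\
  exists P : 'I_(size L) -> 'M[R]_N,
    (forall i, orth_proj (P i)) /\
    (forall i : 'I_(size L), \rank (P i) = nth 0%N L i) /\
    \sum_(i < size L) P i = alpha%:M.

From HB Require Import structures.
From mathcomp Require Import all_boot all_order all_algebra.
From mathcomp Require Import reals.
From mathcomp Require Import ring.
Import Order.TTheory GRing.Theory Num.Theory.
Local Open Scope ring_scope.

(* Factor each P_i = U_i U_i^T with U_i^T U_i = I and put W = [U_1 ... U_K].
   Then W W^T = alpha I, so the Naimark complement G = I - W^T W / alpha is an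
   orthogonal projection, of trace sum_i L_i - N = N (alpha - 1).  Factoring
   G = Z^T Z with Z Z^T = I, the diagonal blocks of G are (1 - 1/alpha) I, so
   the column blocks of sqrt(alphat) Z are isometries whose outer products have
   ranks L_i and sum to alphat I.  The relation between (alpha, N) and
   (alphat, Nt) is symmetric, which gives the reverse inclusion. *)

Section BlockGram.
Variables (R : pzRingType) (p : nat) (q_ : 'I_p -> nat).

Lemma submxblockZ (a : R) (A : 'M[R]_(\sum_i q_ i)) i j :
  submxblock (a *: A) i j = a *: submxblock A i j.
Proof. by apply/matrixP => k l; rewrite !mxE. Qed.

Lemma submxblock1 i : submxblock (1%:M : 'M[R]_(\sum_i q_ i)) i i = 1%:M.
Proof. by rewrite -(@mxdiagZ _ _ q_ 1) submxblock_diag. Qed.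

Lemma submxrow_gram m (Y : 'M[R]_(m, \sum_i q_ i)) i :
  (submxrow Y i)^T *m submxrow Y i = submxblock (Y^T *m Y) i i.
Proof. by rewrite -{3 4}(submxrowK Y) tr_mxrow mul_mxcol_mxrow mxblockK. Qed.

Lemma sum_submxrow_outer m (Y : 'M[R]_(m, \sum_i q_ i)) :
  \sum_i submxrow Y i *m (submxrow Y i)^T = Y *m Y^T.
Proof. by rewrite -mul_mxrow_mxcol -tr_mxrow submxrowK. Qed.

End BlockGram.

Lemma mxtrace_isometry {R : comPzRingType} {m k} {V : 'M[R]_(m, k)} :
  V^T *m V = 1%:M -> \tr (V *m V^T) = k%:R.
Proof. by move=> V1; rewrite mxtrace_mulC V1 mxtrace1. Qed.

Lemma mxrank_isometry {F : fieldType} {m k} {V : 'M[F]_(m, k)} :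
  V^T *m V = 1%:M -> \rank (V *m V^T) = k.
Proof.
move=> V1; apply/eqP; rewrite eqn_leq (leq_trans (mxrankM_maxr _ _)) ?rank_leq_row //.
have VVtV : V^T *m (V *m V^T) *m V = 1%:M by rewrite !mulmxA V1 mul1mx V1.
by rewrite -{1}(mxrank1 F k) -VVtV (leq_trans (mxrankM_maxl _ _)) ?mxrankM_maxr.
Qed.

Section OrthogonalProjection.
Context {R : rcfType} {n : nat}.
Implicit Types (P : 'M[R]_n) (u v : 'cV[R]_n).

Lemma cV_normalize {v} : v != 0 -> exists c : R, (c *: v)^T *m (c *: v) = 1%:M.
Proof.
move=> v0; pose d := \sum_l v l 0 ^+ 2.
have vtv : v^T *m v = d%:M.
  by rewrite [LHS]mx11_scalar mxE; congr _%:M; apply: eq_bigr => l _; rewrite !mxE expr2.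
have d_gt0 : 0 < d.
  rewrite lt_def sumr_ge0 ?andbT => [|l _]; last exact: sqr_ge0.
  apply: contra v0 => /eqP d0; apply/eqP/matrixP => l k; rewrite ord1 mxE.
  by apply/eqP; rewrite -sqrf_eq0; apply/eqP/(psumr_eq0P _ d0) => // j _; apply: sqr_ge0.
exists (Num.sqrt d)^-1.
rewrite [(_ *: v)^T]linearZ /= -scalemxAl -scalemxAr vtv scalerA.
by rewrite scale_scalar_mx -expr2 exprVn sqr_sqrtr ?ltW // mulVf ?gt_eqF.
Qed.

Lemma idempotent_fixed_unit {P} : P *m P = P -> P != 0 ->
  exists2 u : 'cV_n, u^T *m u = 1%:M & P *m u = u.
Proof.
move=> PP P0; have [j colj0] : exists j, col j P != 0.
  apply/existsP; apply: contraR P0 => /existsPn colP0; apply/eqP/matrixP => i j.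
  by move/negPn/eqP/matrixP/(_ i 0): (colP0 j); rewrite !mxE.
have [c cv1] := cV_normalize colj0.
by exists (c *: col j P) => //; rewrite -scalemxAr colE mulmxA PP -colE.
Qed.

Lemma orth_proj_deflate {P u} :
    P *m P = P -> P^T = P -> u^T *m u = 1%:M -> P *m u = u ->
  [/\ (P - u *m u^T) *m (P - u *m u^T) = P - u *m u^T, (P - u *m u^T)^T = P - u *m u^T,
      (P - u *m u^T) *m u = 0 & (\rank (P - u *m u^T)%R < \rank P)%N].
Proof.
move=> PP Pt u1 Pu; set P' := P - u *m u^T.
have uP : u^T *m P = u^T by rewrite -{1}Pt -trmx_mul Pu.
have P'P : P' *m P = P' by rewrite mulmxBl PP -mulmxA uP.
have P'u : P' *m u = 0 by rewrite mulmxBl Pu -mulmxA u1 mulmx1 subrr.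
split=> //; first by rewrite {2}/P' mulmxBr P'P mulmxA P'u mul0mx subr0.
  by rewrite linearB /= trmx_mul trmxK Pt.
rewrite rank_ltmx // ltmxE -{1}P'P submxMl /=; apply/negP => /submxP [D PD].
have u0 : u = 0 by rewrite -Pu PD -mulmxA P'u mulmx0.
by move/matrixP/(_ 0 0): u1; rewrite u0 mulmx0 !mxE => /eqP; rewrite eq_sym oner_eq0.
Qed.

Lemma orth_proj_factor {P} : P *m P = P -> P^T = P ->
  exists m (U : 'M[R]_(n, m)), U^T *m U = 1%:M /\ U *m U^T = P.
Proof.
have [k] := ubnP (\rank P); elim: k P => // k IH P rkP PP Pt.
have [->|P0] := eqVneq P 0.
  by exists 0%N, 0; rewrite [_^T *m _]flatmx0 [1%:M]flatmx0 mul0mx.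
have [u u1 Pu] := idempotent_fixed_unit PP P0.
have [P'P' P't P'u rkP'] := orth_proj_deflate PP Pt u1 Pu.
have [m [U [U1 UP']]] := IH _ (leq_trans rkP' rkP) P'P' P't.
have Utu : U^T *m u = 0 by rewrite -[U^T]mul1mx -U1 -(mulmxA U^T) UP' -mulmxA P'u mulmx0.
have utU : u^T *m U = 0 by rewrite -[U]trmxK -trmx_mul Utu trmx0.
exists (1 + m)%N, (row_mx u U); split.
  by rewrite tr_row_mx mul_col_row u1 Utu utU U1 [RHS]scalar_mx_block.
by rewrite tr_row_mx mul_row_col UP' addrC subrK.
Qed.

End OrthogonalProjection.

Section NaimarkComplement.
Variables (F : fieldType) (n m : nat) (alpha : F) (W : 'M[F]_(n, m)).

Definition naimark_complement : 'M[F]_m := 1%:M - alpha^-1 *: (W^T *m W).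

Lemma naimark_complement_sym : naimark_complement^T = naimark_complement.
Proof. by rewrite linearB /= trmx1 linearZ /= trmx_mul trmxK. Qed.

Hypotheses (alpha0 : alpha != 0) (tightW : W *m W^T = alpha%:M).

Lemma naimark_complement_idem :
  naimark_complement *m naimark_complement = naimark_complement.
Proof.
have WtW2 : W^T *m W *m (W^T *m W) = alpha *: (W^T *m W).
  by rewrite mulmxA -(mulmxA W^T) tightW mul_mx_scalar scalemxAl.
rewrite mulmxBl mul1mx mulmxBr mulmx1 -scalemxAl -scalemxAr WtW2 !scalerA.
by rewrite mulrAC mulVf // mul1r subrr subr0.
Qed.

Lemma mxtrace_naimark_complement : \tr naimark_complement = m%:R - n%:R.
Proof.
rewrite raddfB /= mxtrace1 mxtraceZ mxtrace_mulC tightW mxtrace_scalar.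
by rewrite mulrnAr mulVf.
Qed.

End NaimarkComplement.

Arguments naimark_complement {F n m} alpha W.
Arguments naimark_complement_sym {F n m} alpha W.
Arguments naimark_complement_idem {F n m alpha W}.
Arguments mxtrace_naimark_complement {F n m alpha W}.

Definition tight_isometry_frame {R : pzRingType} (alpha : R) (N : nat) (q : seq nat) :=
  exists2 U : forall i : 'I_(size q), 'M[R]_(N, nth 0%N q i),
    forall i, (U i)^T *m U i = 1%:M & \sum_i U i *m (U i)^T = alpha%:M.

Lemma tight_isometry_frame_dim {R : comPzRingType} {alpha : R} {N q} :
  tight_isometry_frame alpha N q -> (\sum_(i < size q) nth 0%N q i)%:R = alpha * N%:R.
Proof.
case=> U U1 Usum; rewrite mulr_natr -(mxtrace_scalar N) -Usum natr_sum raddf_sum.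
by apply: eq_bigr => i _; rewrite /= mxtrace_isometry.
Qed.

Lemma tight_isometry_frame_complement (R : rcfType) (alpha alphat : R) N Nt q :
    alpha != 0 -> 0 < alphat -> alpha^-1 + alphat^-1 = 1 ->
    Nt%:R = N%:R * (alpha - 1) ->
  tight_isometry_frame alpha N q -> tight_isometry_frame alphat Nt q.
Proof.
move=> alpha0 alphat_gt0 inv_sum dimNt frameU.
have dimq := tight_isometry_frame_dim frameU; case: frameU => U U1 Usum.
pose W := \mxrow_i U i.
have WWt : W *m W^T = alpha%:M by rewrite tr_mxrow mul_mxrow_mxcol.
have [r [Z [Z1 ZG]]] := orth_proj_factor (naimark_complement_idem alpha0 WWt)
  (naimark_complement_sym _ _).
have -> : Nt = r.
  apply/eqP; rewrite -(eqr_nat R) dimNt -(mxtrace_isometry Z1) ZG.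
  by rewrite mxtrace_naimark_complement // dimq; apply/eqP; ring.
pose Y := Num.sqrt alphat *: Z^T.
have YYt : Y *m Y^T = alphat%:M.
  rewrite [Y^T]linearZ /= -scalemxAl -scalemxAr trmxK Z1 scalerA -expr2.
  by rewrite sqr_sqrtr ?ltW ?scalemx1.
have YtY : Y^T *m Y = alphat *: naimark_complement alpha W.
  rewrite [Y^T]linearZ /= -scalemxAl -scalemxAr trmxK ZG scalerA -expr2.
  by rewrite sqr_sqrtr ?ltW.
exists (submxrow Y) => [i|]; last by rewrite sum_submxrow_outer.
rewrite submxrow_gram YtY submxblockZ submxblockB submxblock1 submxblockZ.
have inv_alphat : 1 - alpha^-1 = alphat^-1 by rewrite -inv_sum addrC addKr.
rewrite -submxrow_gram mxrowK U1 -[X in X - _]scale1r -scalerBl inv_alphat.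
by rewrite scalerA mulfV ?gt_eqF // scale1r.
Qed.

Lemma orth_proj_isometry (R : realType) m k (V : 'M[R]_(m, k)) :
  V^T *m V = 1%:M -> orth_proj (V *m V^T).
Proof.
by move=> V1; split; [rewrite mulmxA -(mulmxA V) V1 mulmx1 | rewrite trmx_mul trmxK].
Qed.

Lemma TFF_isometry_frameP (R : realType) (alpha : R) N L :
  TFF alpha N L <->
  [/\ sorted geq L, all (fun l => 0 < l)%N L & tight_isometry_frame alpha N L].
Proof.
split=> [[sortedL [posL [P [projP [rankP sumP]]]]] | [sortedL posL [U U1 sumU]]].
  have /fin_all_exists2 [U U1 UP] : forall i : 'I_(size L),
      exists2 U : 'M[R]_(N, nth 0%N L i), U^T *m U = 1%:M & U *m U^T = P i.
    move=> i; have [PP Pt] := projP i.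
    have [m [U [U1 UP]]] := orth_proj_factor PP Pt.
    have m_eq : m = nth 0%N L i by rewrite -rankP -UP mxrank_isometry.
    by subst m; exists U.
  by split=> //; exists U => //; rewrite -sumP; apply: eq_bigr => i _; rewrite UP.
do 2!split=> //; exists (fun i => U i *m (U i)^T).
by split=> [i|]; [exact: orth_proj_isometry | split=> // i; exact: mxrank_isometry].
Qed.

Theorem corollary2p7 (R : realType) (N : nat) (alpha : R)
  (alphat : R) (Nt : nat) :
  (0 < N)%N -> 1 < alpha ->
  (exists m : nat, alpha * N%:R = m%:R) ->
  alpha^-1 + alphat^-1 = 1 ->
  Nt%:R = N%:R * (alpha - 1) ->
  forall L : seq nat, TFF alpha N L <-> TFF alphat Nt L.
Proof.
move=> _ alpha_gt1 _ inv_sum dimNt L.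
have alpha_gt0 : 0 < alpha := lt_trans ltr01 alpha_gt1.
have alpha1_neq0 : alpha - 1 != 0 by rewrite subr_eq0 gt_eqF.
have alphatE : alphat = alpha / (alpha - 1).
  apply: invr_inj; rewrite invf_div -[alphat^-1](addKr alpha^-1) inv_sum.
  by rewrite mulrBl mulfV ?gt_eqF // div1r addrC.
have alphat_gt0 : 0 < alphat by rewrite alphatE divr_gt0 ?subr_gt0.
rewrite !TFF_isometry_frameP; split=> -[sortedL posL frame]; split=> //.
  by apply: tight_isometry_frame_complement frame => //; apply: lt0r_neq0.
apply: tight_isometry_frame_complement frame => //; first exact: lt0r_neq0.
  by rewrite addrC.
by rewrite dimNt alphatE; field.
Qed.
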